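(* Let $\mathcal{H}$ be a reproducing kernel Hilbert space of real-valued functions on $\mathbb{R}^p$ with positive definite reproducing kernel $K:\mathbb{R}^p\times\mathbb{R}^p\to\mathbb{R}$ and norm $\|\cdot\|_{\mathcal{H}}$. Let training data $\{(y_i,\mathbf{x}_i)\}_{i=1}^N\subset\mathbb{R}\times\mathbb{R}^p$ be given, let $\mu\ge 0$, let $s\in\{1,\dots,N\}$, and let $\lambda_0\ge 0$. For $f\in\mathcal{H}$ set $r_i(f):=y_i-f(\mathbf{x}_i)$ and let $r_{[1]}^2(f)\le\dots\le r_{[N]}^2(f)$ denote the squared residuals $r_1^2(f),\dots,r_N^2(f)$ sorted in nondecreasing order. Suppose $(\hat f,\hat{\mathbf{o}})\in\mathcal{H}\times\mathbb{R}^N$ is a minimizer of $$\min_{f\in\mathcal{H},\ \mathbf{o}\in\mathbb{R}^N}\Big[\sum_{i=1}^N (y_i-f(\mathbf{x}_i)-o_i)^2+\mu\|f\|_{\mathcal{H}}^2+\lambda_0\|\mathbf{o}\|_0\Big],$$ where $\|\mathbf{o}\|_0$ is the number of nonzero entries of $\mathbf{o}=[o_1,\dots,o_N]'$, and suppose $\lambda_0$ is such that $\|\hat{\mathbf{o}}\|_0=N-s$. Then $\hat f$ is a minimizer of the variational least-trimmed squares problem $$\min_{f\in\mathcal{H}}\Big[\sum_{i=1}^{s} r_{[i]}^2(f)+\mu\|f\|_{\mathcal{H}}^2\Big].$$ *)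

From HB Require Import structures.
From mathcomp Require Import all_boot all_order all_algebra.
From mathcomp Require Import reals.
Set Implicit Arguments. Unset Strict Implicit. Unset Printing Implicit Defensive.
Import Order.TTheory GRing.Theory Num.Theory.
Local Open Scope ring_scope.

Definition fn (R : realType) (p : nat) := 'rV[R]_p -> R.

Definition fadd (R : realType) (p : nat) (f g : fn R p) : fn R p := fun z => f z + g z.
Definition fscale (R : realType) (p : nat) (a : R) (f : fn R p) : fn R p := fun z => a * f z.
Definition fsub (R : realType) (p : nat) (f g : fn R p) : fn R p := fun z => f z - g z.

Definition is_RKHS (R : realType) (p : nat) (H : fn R p -> Prop)
    (ip : fn R p -> fn R p -> R) (K : 'rV[R]_p -> 'rV[R]_p -> R) : Prop :=
  H (fun _ => 0) /\
      (forall f g, H f -> H g -> H (fadd f g)) /\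
      (forall a f, H f -> H (fscale a f)) /\
      (forall f g, H f -> H g -> ip f g = ip g f) /\
      (forall a f g h, H f -> H g -> H h ->
         ip (fadd (fscale a f) g) h = a * ip f h + ip g h) /\
      (forall f, H f -> 0 <= ip f f /\ (ip f f = 0 -> f = (fun _ => 0))) /\
      (forall u : nat -> fn R p, (forall n, H (u n)) ->
         (forall e : R, 0 < e -> exists M, forall m n, (M <= m)%N -> (M <= n)%N ->
            ip (fsub (u m) (u n)) (fsub (u m) (u n)) < e) ->
         exists f, H f /\ forall e : R, 0 < e -> exists M, forall n, (M <= n)%N ->
            ip (fsub (u n) f) (fsub (u n) f) < e) /\
      (forall x, H (fun z => K z x)) /\
      (forall f x, H f -> ip f (fun z => K z x) = f x).

Definition pd_kernel (R : realType) (p : nat) (K : 'rV[R]_p -> 'rV[R]_p -> R) :=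
  (forall a b, K a b = K b a) /\
  forall (n : nat) (c : 'I_n -> R) (z : 'I_n -> 'rV[R]_p),
    0 <= \sum_(i < n) \sum_(j < n) c i * c j * K (z i) (z j).

Definition l0norm (R : realType) (N : nat) (o : 'I_N -> R) : nat :=
  #|[set i : 'I_N | o i != 0]|.

Definition outlier_obj (R : realType) (p N : nat) (ip : fn R p -> fn R p -> R)
    (y : 'I_N -> R) (x : 'I_N -> 'rV[R]_p) (mu lam0 : R)
    (f : fn R p) (o : 'I_N -> R) : R :=
  \sum_(i < N) (y i - f (x i) - o i) ^+ 2 + mu * ip f f + lam0 * (l0norm o)%:R.

Definition trimmed_sum (R : realType) (p N : nat) (y : 'I_N -> R)
    (x : 'I_N -> 'rV[R]_p) (s : nat) (f : fn R p) : R :=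
  \sum_(v <- take s (sort <=%R [seq (y i - f (x i)) ^+ 2 | i <- enum 'I_N])) v.

Definition lts_obj (R : realType) (p N : nat) (ip : fn R p -> fn R p -> R)
    (y : 'I_N -> R) (x : 'I_N -> 'rV[R]_p) (mu : R) (s : nat) (f : fn R p) : R :=
  trimmed_sum y x s f + mu * ip f f.

From HB Require Import structures.
From mathcomp Require Import all_boot all_order all_algebra.
From mathcomp Require Import reals.
Set Implicit Arguments.
Unset Strict Implicit.
Unset Printing Implicit Defensive.

Import Order.TTheory GRing.Theory Num.Theory.
Local Open Scope ring_scope.

(* The outlier variables decouple: for a fixed f, the best o with exactly
   N - s nonzero entries zeroes the residuals on an s-element set B and
   absorbs the others, so the data term is the sum of the squared residuals
   over B, which is minimal (and equal to the trimmed sum) when B collects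
   the s smallest ones.  Hence, on the level set ||o||_0 = N - s, the
   outlier objective minus lam0 (N - s) is bounded below by the LTS
   objective with equality for a suitable o, and fhat inherits minimality. *)

Section SumTakeSort.
Variables (R : realDomainType) (T : finType) (g : T -> R).

Lemma sum_le_sum_separated (X Y : {set T}) :
  #|X| = #|Y| -> {in X & Y, forall i j, g i <= g j} ->
  \sum_(i in X) g i <= \sum_(j in Y) g j.
Proof.
move cardX : #|X| => n; elim: n X Y cardX => [|n IHn] X Y cardX cardY sepXY.
  by rewrite (cards0_eq cardX) (cards0_eq (esym cardY)) !big_set0.
have [i Xi] : exists i, i \in X by apply/set0Pn; rewrite -card_gt0 cardX.
have [j Yj] : exists j, j \in Y by apply/set0Pn; rewrite -card_gt0 -cardY.
rewrite (big_setD1 i Xi) (big_setD1 j Yj) /=; apply: lerD; first exact: sepXY.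
have cardXi : #|X :\ i| = n by move: cardX; rewrite (cardsD1 i X) Xi; case.
have cardYj : #|Y :\ j| = n by move: cardY; rewrite (cardsD1 j Y) Yj; case.
by apply: IHn => // u v /setD1P[_ Xu] /setD1P[_ Yv]; exact: sepXY.
Qed.

Let by_g := sort (relpre g <=%R) (enum T).

Let take_by_g_uniq s : uniq (take s by_g).
Proof. by apply: take_uniq; rewrite sort_uniq enum_uniq. Qed.

Let mem_by_g i : i \in by_g.
Proof. by rewrite mem_sort mem_enum. Qed.

Let sum_take_sort_map s :
  \sum_(v <- take s (sort <=%R [seq g i | i <- enum T])) v
  = \sum_(i in [set i in take s by_g]) g i.
Proof.
rewrite sort_map -map_take big_map big_uniq //.
by apply: eq_bigl => i; rewrite inE.
Qed.

Let card_take_by_g s : (s <= #|T|)%N -> #|[set i in take s by_g]| = s.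
Proof.
move=> sT; rewrite cardsE (card_uniqP (take_by_g_uniq s)).
by rewrite size_takel // size_sort -cardT.
Qed.

Lemma sum_take_sort_eq_sum_set s : (s <= #|T|)%N ->
  exists2 B : {set T}, #|B| = s &
    \sum_(v <- take s (sort <=%R [seq g i | i <- enum T])) v = \sum_(i in B) g i.
Proof.
by move=> sT; exists [set i in take s by_g]; rewrite ?sum_take_sort_map ?card_take_by_g.
Qed.

Lemma sum_take_sort_le (A : {set T}) :
  \sum_(v <- take #|A| (sort <=%R [seq g i | i <- enum T])) v <= \sum_(i in A) g i.
Proof.
rewrite sum_take_sort_map; set s := #|A|; set B := [set i in take s by_g].
have cardB : #|B| = s by apply: card_take_by_g; exact: max_card.
have inB i : (i \in B) = (index i by_g < s)%N by rewrite inE in_take.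
have sepB : {in B & ~: B, forall i j, g i <= g j}.
  move=> i j; rewrite in_setC !inB -leqNgt => ilt jge.
  rewrite -(nth_index i (mem_by_g i)) -(nth_index i (mem_by_g j)).
  have le_g_trans : transitive (relpre g <=%R) by move=> ? ? ?; exact: le_trans.
  have by_g_sorted : sorted (relpre g <=%R) by_g.
    by apply: sort_sorted => u v; exact: le_total.
  apply: (sorted_leq_nth le_g_trans (fun _ => lexx _) _ by_g_sorted);
    rewrite ?inE ?index_mem //.
  exact: ltnW (leq_trans ilt jge).
rewrite (big_setID A) [X in _ <= X](big_setID B) /= setIC lerD2l.
apply: sum_le_sum_separated; first by rewrite !cardsD cardB setIC.
by move=> i j /setDP[Bi _] /setDP[_ Bj]; apply: sepB; rewrite ?in_setC.
Qed.

End SumTakeSort.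

Section OutlierObjective.
Variables (R : realType) (p N : nat) (ip : fn R p -> fn R p -> R).
Variables (y : 'I_N -> R) (x : 'I_N -> 'rV[R]_p) (mu lam0 : R) (s : nat).
Hypothesis sN : (s <= N)%N.

Lemma lts_obj_le_outlier_obj f o : l0norm o = (N - s)%N ->
  lts_obj ip y x mu s f + lam0 * (N - s)%:R <= outlier_obj ip y x mu lam0 f o.
Proof.
move=> l0o; rewrite /lts_obj /outlier_obj l0o !lerD2r.
set Z := ~: [set i | o i != 0].
have cardZ : #|Z| = s by rewrite cardsCs setCK card_ord -/(l0norm o) l0o subKn.
rewrite /trimmed_sum -cardZ.
apply: le_trans (sum_take_sort_le (fun i => (y i - f (x i)) ^+ 2) Z) _.
rewrite [X in _ <= X](bigID (mem Z)) /= -[X in X <= _]addr0; apply: lerD.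
  by apply: ler_sum => i; rewrite !inE negbK => /eqP ->; rewrite subr0.
by apply: sumr_ge0 => i _; exact: sqr_ge0.
Qed.

Lemma exists_outlier_obj_le_lts_obj f : 0 <= lam0 ->
  exists o, outlier_obj ip y x mu lam0 f o <= lts_obj ip y x mu s f + lam0 * (N - s)%:R.
Proof.
move=> lam0_ge0; set r := fun i => y i - f (x i).
have [|B cardB trimB] := sum_take_sort_eq_sum_set (fun i => r i ^+ 2) (s := s).
  by rewrite card_ord.
pose o i := if i \in B then 0 else r i.
have data_o : \sum_(i < N) (y i - f (x i) - o i) ^+ 2 = trimmed_sum y x s f.
  rewrite /trimmed_sum trimB [RHS]big_mkcond; apply: eq_bigr => i _.
  by rewrite /o /r; case: (i \in B); rewrite ?subr0 ?subrr ?expr0n.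
have l0o : (l0norm o <= N - s)%N.
  rewrite -[X in (_ <= X - _)%N]card_ord -cardB -(cardsC B) addKn.
  apply: subset_leq_card; apply/subsetP => i.
  by rewrite !inE /o; case: (i \in B); rewrite ?eqxx.
exists o; rewrite /lts_obj /outlier_obj data_o lerD2l.
by rewrite ler_wpM2l // ler_nat.
Qed.

End OutlierObjective.

Theorem proposition1 (R : realType) (p N : nat)
    (H : fn R p -> Prop) (ip : fn R p -> fn R p -> R)
    (K : 'rV[R]_p -> 'rV[R]_p -> R)
    (hH : is_RKHS H ip K) (hK : pd_kernel K)
    (y : 'I_N -> R) (x : 'I_N -> 'rV[R]_p)
    (mu : R) (hmu : 0 <= mu) (s : nat) (hs1 : (1 <= s)%N) (hsN : (s <= N)%N)
    (lam0 : R) (hlam0 : 0 <= lam0)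
    (fhat : fn R p) (ohat : 'I_N -> R) (hfhat : H fhat)
    (hmin : forall (f : fn R p) (o : 'I_N -> R), H f ->
        outlier_obj ip y x mu lam0 fhat ohat <= outlier_obj ip y x mu lam0 f o)
    (hl0 : l0norm ohat = (N - s)%N) :
  forall f : fn R p, H f -> lts_obj ip y x mu s fhat <= lts_obj ip y x mu s f.
Proof.
move=> f Hf.
have [o fo_le] := exists_outlier_obj_le_lts_obj ip y x mu hsN f hlam0.
have fhat_ge := lts_obj_le_outlier_obj ip y x mu lam0 hsN fhat hl0.
rewrite -(lerD2r (lam0 * (N - s)%:R)).
exact: le_trans fhat_ge (le_trans (hmin f o Hf) fo_le).
Qed.
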